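(* Let $\psi:[0,\infty)\to[0,\infty)$ be increasing with $\psi(x)/x\to\infty$ as $x\to\infty$. Let $\mathcal Z\subset\mathbb R^q$ and let $f=u-l:\mathcal Z\to[0,\infty)$ be continuous with $f(z)\to\infty$ as $|z|\to\infty$ and $\psi(f)\in\mathcal L_\tau(P^\star)$. Then $f\in\mathcal M_\tau(P^\star)$, and for every $\varepsilon>0$ and every $Q\in\mathcal Q$ there is a compact $C\subset\mathcal Z$ with $Q\big(f\mathbb 1_{C^c}\big)<\varepsilon$.
   Context: $P^\star$ is a probability measure on $\mathcal Z\subset\mathbb R^q$. $\tau(s)=e^{|s|}-|s|-1$; $\mathcal L_\tau(P^\star)=\{g:\exists a>0,\ P^\star\tau(g/a)<\infty\}$ and $\mathcal M_\tau(P^\star)=\{g:\forall a>0,\ P^\star\tau(g/a)<\infty\}$; $\mathcal L_\tau(P^\star)$ is a Banach space for $\|g\|_\tau=\inf\{a>0:P^\star\tau(g/a)\le1\}$ with topological dual $\mathcal L'_\tau(P^\star)$. $\mathcal P=\{p^{-1}\sum_{i=1}^p\delta_{z_i}:p\ge1,z_i\in\mathcal Z\}$; $\mathcal Q=\{Q\in\mathcal L'_\tau(P^\star):Q\ge0,\ Q1=1\}\cup\mathcal P$; $Qg$ denotes the action of $Q$ on $g$ (integration for elements of $\mathcal P$). *)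

From HB Require Import structures.
From mathcomp Require Import all_boot all_order all_algebra.
From mathcomp Require Import all_classical all_reals all_analysis.
Set Implicit Arguments. Unset Strict Implicit. Unset Printing Implicit Defensive.
Import Order.TTheory GRing.Theory Num.Theory.
Import numFieldNormedType.Exports.
Local Open Scope classical_set_scope.
Local Open Scope ring_scope.

(* R^q with its Borel sigma-algebra (generated by the open sets of the
   normed space 'rV[R]_q).  Definitionally equal to 'rV[R]_q. *)
Definition borelRq (R : realType) (q : nat) :=
  g_sigma_algebraType (@open 'rV[R]_q).

Definition tau (R : realType) (s : R) : R := expR `|s| - `|s| - 1.

Section Orlicz.
Variables (R : realType) (q : nat) (Z : set 'rV[R]_q)
  (Pstar : probability (borelRq R q) R).

(* Pstar tau(g / a), an extended real, integrating over Z (Pstar lives on Z) *)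
Definition Ptau (g : 'rV[R]_q -> R) (a : R) : \bar R :=
  (\int[Pstar]_(x in (Z : set (borelRq R q))) (tau (g x / a))%:E)%E.

Definition meas (g : 'rV[R]_q -> R) : Prop :=
  @measurable_fun _ _ (borelRq R q) R Z g.

Definition Ltau (g : 'rV[R]_q -> R) : Prop :=
  meas g /\ exists a : R, 0 < a /\ (Ptau g a < +oo)%E.

Definition Mtau (g : 'rV[R]_q -> R) : Prop :=
  meas g /\ forall a : R, 0 < a -> (Ptau g a < +oo)%E.

Definition tau_norm (g : 'rV[R]_q -> R) : R :=
  inf [set a : R | 0 < a /\ (Ptau g a <= 1)%E].

(* Q is (the action of) an element of the topological dual L'_tau(Pstar):
   a linear functional on L_tau(Pstar), bounded for ||.||_tau. *)
Definition in_dual (Q : ('rV[R]_q -> R) -> R) : Prop :=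
  (forall g h a b, Ltau g -> Ltau h ->
     Q (fun x => a * g x + b * h x) = a * Q g + b * Q h) /\
  (exists K : R, forall g, Ltau g -> `|Q g| <= K * tau_norm g).

Definition in_calQ (Q : ('rV[R]_q -> R) -> R) : Prop :=
  (in_dual Q /\
   (forall g, Ltau g -> (forall x, Z x -> 0 <= g x) -> 0 <= Q g) /\
   Q (fun _ => 1) = 1)
  \/
  (exists (p : nat) (z : 'I_p -> 'rV[R]_q), (0 < p)%N /\
     (forall i, Z (z i)) /\
     forall g, Q g = (p%:R)^-1 * \sum_(i < p) g (z i)).

End Orlicz.

(* Superlinearity of psi dominates tau (f / a), for every a > 0, by a constant
   plus tau (psi (f) / b), so f is in M_tau.  For Q in the dual, boundedness
   reduces Q (f 1_{C^c}) < eps to P* tau (f 1_{C^c} / a) <= 1 for a suitable a,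
   which holds as soon as P* (Z \ C) is small, by absolute continuity of the
   integral of tau (f / a).  Such a compact C exists because a finite Borel
   measure on R^q is inner regular: the sets approximable from inside by closed
   sets, together with their complements, form a sigma-algebra containing the
   open sets, and cutting a closed set with a large ball makes it compact.
   For an empirical Q one takes C to be its finite support. *)

From HB Require Import structures.
From mathcomp Require Import all_boot all_order all_algebra.
From mathcomp Require Import all_classical all_reals all_analysis.
From mathcomp Require Import ring lra measurable_realfun.
Set Implicit Arguments. Unset Strict Implicit. Unset Printing Implicit Defensive.
Import Order.TTheory GRing.Theory Num.Theory.
Import numFieldNormedType.Exports.
Local Open Scope classical_set_scope.
Local Open Scope ring_scope.

Section ClosedInnerRegularity.
Variables (R : realType) (V : normedModType R).
Local Notation T := (g_sigma_algebraType (@open V)).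
Variable mu : {finite_measure set T -> \bar R}.

Lemma open_sigma_measurable (G : set V) : open G -> measurable (G : set T).
Proof. by move=> oG; apply: sub_gen_smallest. Qed.

Lemma closed_sigma_measurable (F : set V) : closed F -> measurable (F : set T).
Proof.
move=> cF; rewrite -(setCK F); apply: measurableC; apply: open_sigma_measurable.
exact: closed_openC.
Qed.

Lemma within_continuous_measurable_fun (D : set T) (f : V -> R) :
  measurable D -> {within D, continuous f} -> measurable_fun D f.
Proof.
move=> mD /continuousP cf; apply: (measurability _ (RGenOpens.measurableE R)).
move=> _ [_ [a [b ->] <-]].
have /open_subspaceP [W oW WD] : open (f @^-1` `]a, b[%classic : set (subspace D)).
  exact/cf/interval_open.
by rewrite setIC -WD; apply: measurableI => //; exact: open_sigma_measurable.
Qed.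

Lemma nonincreasing_bigcap0_measure_le (S : nat -> set T) :
  (forall n, measurable (S n)) -> nonincreasing_seq S -> \bigcap_n S n = set0 ->
  forall e : R, 0 < e -> exists N, (mu (S N) <= e%:E)%E.
Proof.
move=> mS niS capS e e0.
have S0fin : (mu (S 0%N) < +oo)%E by rewrite ltey_eq fin_num_measure.
have := nonincreasing_cvg_mu S0fin mS (bigcapT_measurable mS) niS.
rewrite capS measure0 => /fine_cvgP[fin cvg0].
have lt_e := cvgr_lt _ cvg0 _ e0.
near \oo => N; exists N.
have finN : mu (S N) \is a fin_num by near: N; exact: fin.
rewrite -(fineK finN) lee_fin ltW //; near: N; exact: lt_e.
Unshelve. all: by end_near. Qed.

Lemma measure_bigcup_geometric_le (G : nat -> set T) (e : R) : 0 <= e ->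
  (forall n, measurable (G n)) ->
  (forall n, (mu (G n) <= (e / (2 ^ n.+1)%:R)%:E)%E) ->
  (mu (\bigcup_n G n) <= e%:E)%E.
Proof.
move=> e0 mG muG.
have : (mu (\bigcup_n G n) <= \sum_(0 <= n <oo) mu (G n))%E.
  by apply: measure_sigma_subadditive => //; exact: bigcupT_measurable.
move/le_trans; apply.
apply: le_trans (epsilon_trick0 predT e0).
by apply: lee_nneseries => // n _ _; exact: measure_ge0.
Qed.

Lemma measure_bigcup_tail_le (A : nat -> set T) :
  (forall n, measurable (A n)) -> forall e : R, 0 < e ->
  exists N, (mu (\bigcup_n A n `\` \big[setU/set0]_(n < N) A n) <= e%:E)%E.
Proof.
move=> mA; apply: nonincreasing_bigcap0_measure_le.
- move=> N; apply: measurableD; first exact: bigcupT_measurable.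
  by apply: bigsetU_measurable => n _; exact: mA.
- apply/nonincreasing_seqP => N; rewrite subsetEset; apply: setDS.
  by rewrite big_ord_recr /=; exact: subsetUl.
- apply/seteqP; split => x // tail_x.
  have [[n _ Anx] _] := tail_x 0%N I.
  by have [_ []] := tail_x n.+1 I; rewrite big_ord_recr /=; right.
Qed.

Definition closed_inner_approx (A : set T) := forall e : R, 0 < e ->
  exists F : set V, [/\ closed F, F `<=` A & (mu (A `\` F) <= e%:E)%E].

Lemma closed_inner_approx_closed (F : set V) : closed F -> closed_inner_approx F.
Proof.
by move=> cF e e0; exists F; split => //; rewrite setDv measure0 lee_fin ltW.
Qed.

Lemma open_closed_inner_approx (G : set V) : open G -> closed_inner_approx G.
Proof.
move=> oG e e0.
pose r (n : nat) : R := n.+1%:R^-1.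
have r_gt0 n : 0 < r n by rewrite invr_gt0 ltr0n.
pose F n : set V := \bigcap_(y in ~` G) ~` ball y (r n).
have cF n : closed (F n).
  by apply: closed_bigI => y _; apply: open_closedC; exact: ball_open.
have FG n : F n `<=` G.
  by move=> x Fx; apply: contrapT => nGx; exact: Fx x nGx (ballxx x (r_gt0 n)).
have [N muN] : exists N, (mu ((G : set T) `\` F N) <= e%:E)%E.
  apply: nonincreasing_bigcap0_measure_le => //.
  - move=> n; apply: measurableD; first exact: open_sigma_measurable.
    exact: closed_sigma_measurable.
  - apply/nonincreasing_seqP => n; rewrite subsetEset; apply: setDS.
    move=> x Fx y nGy bxy; apply: (Fx y nGy); apply: le_ball bxy.
    by rewrite /r lef_pV2 ?posrE ?ltr0n // ler_nat.
  - apply/seteqP; split => x // GF_x.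
    have [Gx _] := GF_x 0%N I.
    have /nbhs_ballP [s s_gt0 bG] := open_nbhs_nbhs (conj oG Gx).
    pose n := Num.truncn s^-1.
    have rns : r n < s.
      rewrite /r -[s]invrK ltf_pV2 ?posrE ?invr_gt0 ?ltr0n //.
      exact: truncnS_gt.
    have [_ []] := GF_x n I; move=> y nGy bxy; apply: nGy; apply: bG.
    by apply: (@le_ball _ _ x (r n) s (ltW rns)); exact: ball_sym.
by exists (F N); split.
Qed.

Lemma closed_inner_approx_bigcup (A : nat -> set T) :
  (forall n, measurable (A n)) -> (forall n, closed_inner_approx (A n)) ->
  closed_inner_approx (\bigcup_n A n).
Proof.
move=> mA iA e e0; have e2_gt0 : 0 < e / 2 by rewrite divr_gt0.
have [N muN] := measure_bigcup_tail_le mA e2_gt0.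
have /choice [F HF] : forall n, exists F : set V, [/\ closed F, F `<=` A n &
    (mu (A n `\` F) <= (e / 2 / (2 ^ n.+1)%:R)%:E)%E].
  by move=> n; apply: iA; rewrite divr_gt0 // ltr0n expn_gt0.
have mF n : measurable (F n : set T).
  by case: (HF n) => cF _ _; exact: closed_sigma_measurable.
have mAF : measurable (\bigcup_n (A n `\` F n)).
  by apply: bigcupT_measurable => n; exact: measurableD.
exists (\big[setU/set0]_(n < N) F n); split.
- by apply: closed_bigsetU => n _; case: (HF n).
- move=> x; rewrite -bigcup_mkord => -[n _ Fnx]; exists n => //.
  by case: (HF n) => _ + _; apply.
apply: (@le_trans _ _ (mu ((\bigcup_n A n `\` \big[setU/set0]_(n < N) A n)
    `|` \bigcup_n (A n `\` F n)))).
  apply: le_measure; rewrite ?inE.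
  - by apply: measurableD; [exact: bigcupT_measurable|exact: bigsetU_measurable].
  - apply: measurableU mAF; apply: measurableD; first exact: bigcupT_measurable.
    exact: bigsetU_measurable.
  - move=> x [Ux nFx]; have [|nBx] := pselect ((\big[setU/set0]_(n < N) A n) x).
      rewrite -bigcup_mkord => -[n /= nN Anx]; right; exists n => //.
      by split => // Fnx; apply: nFx; rewrite -bigcup_mkord; exists n.
    by left.
apply: le_trans (measureU2 _ _ mAF) _.
  apply: measurableD; first exact: bigcupT_measurable.
  exact: bigsetU_measurable.
rewrite [e in (_ <= e%:E)%E](splitr e) EFinD; apply: leeD => //.
apply: measure_bigcup_geometric_le => //; first exact: ltW.
  by move=> n; exact: measurableD.
by move=> n; case: (HF n).
Qed.

Lemma closed_inner_approx_bigcap (A : nat -> set T) :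
  (forall n, measurable (A n)) -> (forall n, closed_inner_approx (A n)) ->
  closed_inner_approx (\bigcap_n A n).
Proof.
move=> mA iA e e0.
have /choice [F HF] : forall n, exists F : set V, [/\ closed F, F `<=` A n &
    (mu (A n `\` F) <= (e / (2 ^ n.+1)%:R)%:E)%E].
  by move=> n; apply: iA; rewrite divr_gt0 // ltr0n expn_gt0.
have mF n : measurable (F n : set T).
  by case: (HF n) => cF _ _; exact: closed_sigma_measurable.
exists (\bigcap_n F n); split.
- by apply: closed_bigI => n _; case: (HF n).
- by move=> x Fx n _; case: (HF n) => _ + _; apply; exact: Fx.
apply: (@le_trans _ _ (mu (\bigcup_n (A n `\` F n)))).
  apply: le_measure; rewrite ?inE.
  - by apply: measurableD; exact: bigcapT_measurable.
  - by apply: bigcupT_measurable => n; exact: measurableD.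
  - move=> x [Ax nFx]; have [n nFnx] : exists n, ~ F n x.
      by apply/existsNP => Fx; apply: nFx => n _; exact: Fx.
    by exists n => //; split => //; exact: Ax.
apply: measure_bigcup_geometric_le => //; first exact: ltW.
  by move=> n; exact: measurableD.
by move=> n; case: (HF n).
Qed.

Definition closed_regular (A : set T) :=
  [/\ measurable A, closed_inner_approx A & closed_inner_approx (~` A)].

Lemma closed_regular_sigma_algebra : sigma_algebra setT closed_regular.
Proof.
split.
- split => //; first exact: closed_inner_approx_closed closed0.
  by rewrite setC0; exact: closed_inner_approx_closed closedT.
- by move=> A [mA iA iAC]; rewrite setTD; split => //; [exact: measurableC|rewrite setCK].
- move=> A regA.
  have mA n : measurable (A n) by case: (regA n).
  have mAC n : measurable (~` A n) by apply: measurableC.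
  split; first exact: bigcupT_measurable.
    by apply: closed_inner_approx_bigcup => // n; case: (regA n).
  by rewrite setC_bigcup; apply: closed_inner_approx_bigcap => // n; case: (regA n).
Qed.

Lemma measurable_closed_inner_approx (A : set T) :
  measurable A -> closed_inner_approx A.
Proof.
move=> mA; suff : closed_regular A by case.
apply: (smallest_sub closed_regular_sigma_algebra _ mA) => G oG.
split; first exact: open_sigma_measurable.
  exact: open_closed_inner_approx.
exact: closed_inner_approx_closed (open_closedC oG).
Qed.

End ClosedInnerRegularity.

Lemma compact_inner_approx (R : realType) (q : nat)
    (mu : {finite_measure set borelRq R q -> \bar R}) (Z : set (borelRq R q)) :
  measurable Z -> forall e : R, 0 < e ->
  exists C : set 'rV[R]_q, [/\ compact C, C `<=` Z & (mu (Z `\` C) <= e%:E)%E].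
Proof.
move=> mZ e e0; have e2_gt0 : 0 < e / 2 by rewrite divr_gt0.
have [F [cF FZ muF]] := measurable_closed_inner_approx mu mZ e2_gt0.
pose S (n : nat) : set 'rV[R]_q := [set x | n%:R < `|x|].
have oS n : open (S n).
  exact: ((continuousP _).1 (@norm_continuous R 'rV[R]_q) _ (@open_gt R n%:R)).
have mS n : measurable (S n : set (borelRq R q)) by exact: open_sigma_measurable.
have [N muN] : exists N, (mu (S N) <= (e / 2)%:E)%E.
  apply: nonincreasing_bigcap0_measure_le => //.
    apply/nonincreasing_seqP => n; rewrite subsetEset => x /= h.
    by apply: lt_trans h; rewrite ltr_nat.
  apply/seteqP; split => x // Sx.
  have := Sx (Num.truncn `|x|).+1 I; rewrite /S /=.
  by rewrite ltNge ltW // truncnS_gt.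
have mF : measurable (F : set (borelRq R q)) by exact: closed_sigma_measurable.
exists (F `&` ~` S N); split.
- apply: bounded_closed_compact.
    exists N%:R; split; first exact: num_real.
    move=> M NM x [_ Sx]; apply: ltW; apply: le_lt_trans NM.
    by rewrite leNgt; apply/negP.
  by apply: closedI => //; exact: open_closedC.
- by move=> x [Fx _]; exact: FZ.
apply: (@le_trans _ _ (mu ((Z `\` F) `|` S N))).
  apply: le_measure; rewrite ?inE.
  - apply: measurableD => //; apply: measurableI => //; exact: measurableC.
  - by apply: measurableU => //; exact: measurableD.
  - move=> x [Zx nC]; have [SNx|nSNx] := pselect (S N x); first by right.
    by left; split => // Fx; apply: nC.
apply: le_trans (measureU2 mu (measurableD mZ mF) (mS N)) _.
by rewrite [e in (_ <= e%:E)%E](splitr e) EFinD; exact: leeD.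
Qed.

Section Tau.
Variable R : realType.

Lemma tau0 : tau (0 : R) = 0.
Proof. by rewrite /tau normr0 expR0 subr0 subrr. Qed.

Lemma tau_ge0 (s : R) : 0 <= tau s.
Proof. by rewrite /tau subr_ge0 lerBrDr expR_ge1Dx. Qed.

Lemma ler_tau (s t : R) : 0 <= s -> s <= t -> tau s <= tau t.
Proof.
move=> s0 st; have t0 : 0 <= t by apply: le_trans st.
have key : expR s * (1 + (t - s)) <= expR t.
  have -> : expR t = expR s * expR (t - s) by rewrite -expRD addrC subrK.
  by rewrite ler_wpM2l ?expR_ge0 // expR_ge1Dx.
have es_ge1 : 1 <= expR s by rewrite -expR0 ler_expR.
rewrite /tau !ger0_norm // lerD2r; nra.
Qed.

Lemma continuous_tau : continuous (@tau R).
Proof.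
move=> x; apply: cvgB; last exact: cvg_cst.
apply: cvgB; last exact: norm_continuous.
apply: (@continuous_comp _ _ _ (@Num.norm _ R) expR); first exact: norm_continuous.
exact: continuous_expR.
Qed.

Lemma tau_le_split (a b m y z : R) : 0 < a -> 0 <= y ->
  (m <= y -> y / a <= z / b) -> tau (y / a) <= tau (m / a) + tau (z / b).
Proof.
move=> a_gt0 y_ge0 yz; have ya_ge0 : 0 <= y / a by rewrite divr_ge0 // ltW.
have [my | ym] := leP m y.
  by rewrite -[leLHS]add0r lerD ?tau_ge0 // ler_tau // yz.
rewrite -[leLHS]addr0 lerD ?tau_ge0 // ler_tau //.
by rewrite ler_pM2r ?invr_gt0 // ltW.
Qed.

End Tau.

Section OrliczClass.
Variables (R : realType) (q : nat) (Z : set 'rV[R]_q)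
  (Pstar : probability (borelRq R q) R).
Hypothesis mZ : measurable (Z : set (borelRq R q)).
Local Notation T := (borelRq R q).
Local Notation meas := (meas Z).
Local Notation Ptau := (Ptau Z Pstar).
Local Notation Ltau := (Ltau Z Pstar).
Local Notation Mtau := (Mtau Z Pstar).
Local Notation tau_norm := (tau_norm Z Pstar).

Lemma measurable_fun_tau (g : 'rV[R]_q -> R) (a : R) : meas g ->
  measurable_fun (Z : set T) (fun x => (tau (g x / a))%:E).
Proof.
move=> mg; apply/measurable_EFinP.
apply: (measurableT_comp (continuous_measurable_fun (@continuous_tau R))).
by apply: measurable_funM => //; exact: measurable_cst.
Qed.

Lemma Ptau_lty_le (g h : 'rV[R]_q -> R) (a b c : R) : meas g -> meas h -> 0 <= c ->
  (forall x, Z x -> tau (g x / a) <= c + tau (h x / b)) ->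
  (Ptau h b < +oo)%E -> (Ptau g a < +oo)%E.
Proof.
move=> mg mh c_ge0 gh hfin.
have tau_ge0E (k : 'rV[R]_q -> R) d : forall x, Z x -> (0 <= (tau (k x / d))%:E)%E.
  by move=> x _; rewrite lee_fin tau_ge0.
have : (Ptau g a <= \int[Pstar]_(x in (Z : set T)) (c%:E + (tau (h x / b))%:E))%E.
  apply: (ge0_le_integral _ mZ); [exact: tau_ge0E|exact: measurable_fun_tau| |].
    exact: emeasurable_funD (measurable_cst c%:E) (measurable_fun_tau b mh).
  by move=> x Zx; rewrite -EFinD lee_fin gh.
move/le_lt_trans; apply.
rewrite ge0_integralD //; [|exact: tau_ge0E|exact: measurable_fun_tau].
rewrite integral_cst //; apply: lte_add_pinfty => //.
by apply: lte_mul_pinfty => //; rewrite ltey_eq fin_num_measure.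
Qed.

Lemma Mtau_superlinear (psi : R -> R) (f : 'rV[R]_q -> R) :
  psi x / x @[x --> +oo] --> +oo -> (forall z, Z z -> 0 <= f z) -> meas f ->
  Ltau (fun z => psi (f z)) -> Mtau f.
Proof.
move=> psi_superlin f_ge0 mf [mpsif [b [b_gt0 psif_fin]]]; split => // a a_gt0.
have [M [_ psiM]] := (cvgryPge _).1 psi_superlin (b / a).
pose m := `|M| + 1; have Mm : M < m by rewrite /m ltr_pwDr // ler_norm.
apply: (@Ptau_lty_le _ (fun z => psi (f z)) _ b (tau (m / a))) => //.
  exact: tau_ge0.
move=> x Zx; apply: tau_le_split => // [|mfx]; first exact: f_ge0.
have fx_gt0 : 0 < f x by apply: lt_le_trans mfx; rewrite /m ltr_pwDr.
have := psiM (f x) (lt_le_trans Mm mfx); rewrite ler_pdivlMr // => bfx.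
have -> : f x / a = b / a * f x / b by field; rewrite !gt_eqF.
by rewrite ler_pM2r ?invr_gt0.
Qed.

Lemma tau_norm_le (g : 'rV[R]_q -> R) (a : R) : 0 < a -> (Ptau g a <= 1)%E ->
  0 <= tau_norm g <= a.
Proof.
move=> a_gt0 Pga; have Sa : [set a | 0 < a /\ (Ptau g a <= 1)%E] a by [].
apply/andP; split.
  by apply: lb_le_inf; [exists a | move=> c [c_gt0 _]; exact: ltW].
by apply: ge_inf Sa; exists 0 => c [c_gt0 _]; exact: ltW.
Qed.

Lemma in_dual_lt (Q : ('rV[R]_q -> R) -> R) : in_dual Z Pstar Q ->
  forall eps : R, 0 < eps ->
  exists2 a, 0 < a & forall g, meas g -> (Ptau g a <= 1)%E -> Q g < eps.
Proof.
move=> [_ [K QK]] eps eps_gt0; have K1_gt0 : 0 < `|K| + 1 by rewrite ltr_pwDr.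
exists (eps / (`|K| + 1)) => [|g mg Pg]; first by rewrite divr_gt0.
set a := eps / _ in Pg *; have a_gt0 : 0 < a by rewrite divr_gt0.
have Lg : Ltau g by split => //; exists a; split => //; exact: le_lt_trans Pg (ltey _).
have /andP[n_ge0 n_le] := tau_norm_le a_gt0 Pg.
have Ka : `|K| * a = eps - a by rewrite /a; field; rewrite gt_eqF.
have := QK g Lg; have := ler_norm (Q g); have := ler_norm K.
have := normr_ge0 K; nra.
Qed.

Lemma Ptau_indic_lt1 (g : 'rV[R]_q -> R) (a : R) : Mtau g -> 0 < a ->
  exists2 d, 0 < d & forall A : set T, measurable A ->
    (Pstar (Z `&` A) < d%:E)%E -> (Ptau (fun x => (g x * \1_A x)%R) a < 1)%E.
Proof.
move=> [mg gfin] a_gt0; pose k := (fun x => tau (g x / a)) \_ Z.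
have intk : Pstar.-integrable setT (EFin \o k).
  have : Pstar.-integrable Z (fun x => (tau (g x / a))%:E).
    apply/integrableP; split; first exact: measurable_fun_tau.
    under eq_integral => x _ do rewrite gee0_abs ?lee_fin ?tau_ge0 //.
    exact: gfin.
  move/(integrable_mkcond _ mZ); congr (_.-integrable _ _); apply/funext => x /=.
  by rewrite /k !patchE; case: ifP.
have [d [d_gt0 small]] := integral_normr_continuous intk ltr01.
exists d => // A mA PA; have mZA : measurable ((Z : set T) `&` A) by exact: measurableI.
have -> : Ptau (fun x => (g x * \1_A x)%R) a =
    (\int[Pstar]_(x in (Z : set T) `&` A) (`|k x|)%:E)%E.
  rewrite /Ptau integral_mkcondr; apply: eq_integral => x /[!inE] Zx.
  rewrite patchE indicE; case: ifPn => Ax.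
    by rewrite mulr1 /k patchE (mem_set Zx) ger0_norm // tau_ge0.
  by rewrite mulr0 mul0r tau0.
have intkA : Pstar.-integrable ((Z : set T) `&` A) (fun x => (`|k x|)%:E).
  exact: integrableS (integrable_abse intk).
by rewrite -(fineK (integrable_fin_num mZA intkA)) lte_fin; exact: small.
Qed.

End OrliczClass.

Theorem lemmaE1 (R : realType) (q : nat) (Z : set 'rV[R]_q)
  (Pstar : probability (borelRq R q) R)
  (HZ : measurable (Z : set (borelRq R q)))
  (HPZ : Pstar (~` (Z : set (borelRq R q))) = 0%E)
  (psi : R -> R)
  (psi_ge0 : forall x, 0 <= x -> 0 <= psi x)
  (psi_incr : {in `[0, +oo[ &, {homo psi : x y / x <= y}})
  (psi_superlin : psi x / x @[x --> +oo] --> +oo)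
  (f : 'rV[R]_q -> R)
  (f_ge0 : forall z, Z z -> 0 <= f z)
  (f_cont : {within Z, continuous f})
  (f_coercive : forall M : R, exists r : R,
      forall z, Z z -> r < `|z| -> M <= f z)
  (psif_L : Ltau Z Pstar (fun z => psi (f z))) :
  Mtau Z Pstar f /\
  forall (eps : R), 0 < eps ->
  forall Q : ('rV[R]_q -> R) -> R, in_calQ Z Pstar Q ->
  exists C : set 'rV[R]_q,
    compact C /\ C `<=` Z /\
    Q (fun z => f z * \1_(~` C) z) < eps.
Proof.
have mf : meas Z f := within_continuous_measurable_fun HZ f_cont.
have Mf : Mtau Z Pstar f := Mtau_superlinear HZ psi_superlin f_ge0 mf psif_L.
split => // eps eps_gt0 Q [[Qdual _] | [p [z [_ [zZ Qz]]]]].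
- have [a a_gt0 Q_lt] := in_dual_lt Qdual eps_gt0.
  have [d d_gt0 Ptau_lt1] := Ptau_indic_lt1 HZ Mf a_gt0.
  have d2_gt0 : 0 < d / 2 by rewrite divr_gt0.
  have [C [cC CZ PZC]] := compact_inner_approx Pstar HZ d2_gt0.
  have mCc : measurable (~` C : set (borelRq R q)).
    exact: measurableC (closed_sigma_measurable (compact_closed (@norm_hausdorff _ _) cC)).
  exists C; do 2 split => //; apply: Q_lt.
    by apply: measurable_funM => //; exact: measurable_indic.
  apply/ltW/Ptau_lt1 => //; rewrite -setDE; apply: le_lt_trans PZC _.
  by rewrite lte_fin; lra.
- exists (range z); split.
    exact/finite_compact/finite_image/finite_finset.
  split; first by move=> _ [i _ <-].
  rewrite Qz big1 ?mulr0 // => i _.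
  by rewrite indicE memNset ?mulr0 //; apply; exists i.
Qed.
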